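(* Let $p\in\mathbb{C}[x]$ of degree $n\ge2$ have $k\ge2$ distinct roots, let $\hat z_1,\dots,\hat z_n\in\mathbb{C}$ with $\|p-p_n\prod_j(x-\hat z_j)\|_1\le 2^{-b}\|p\|_1$, and assume $b\ge b_0$, where $b_0$ is the smallest integer that is a power of two, is at least $\max(8n,n\log n)$, and for all $i=1,\dots,k$ satisfies $$2^{-b/(2m_i)}\le\tfrac{1}{2n^2},\quad 2^{-b/(2m_i)}\le\tfrac{\sigma_i}{2n},\quad 2^{-b/2}\le\tfrac{|P_i|}{16(n+1)2^{\tau_p}M(z_i)^n},$$ $$2^{-b/(2m_i)}<\min\Big(\big(\tfrac{\sigma_i}{4n}\big)^8,\tfrac{\sigma_i}{1024n^2}\Big),\quad 2^{-b/8}<\min\Big(\tfrac1{16},\tfrac{|P_i|}{(n+1)2^{2n\Gamma_p+8n}}\Big).$$ Let $Z_i$ denote the set of those $\hat z_j$ lying in $\Delta(z_i,2^{-b/(2m_i)})$. Then for $i\ne j$, $\hat z\in Z_i$ and $\hat z'\in Z_j$, $$|\hat z-\hat z'|\ge 2\big(2^{-b/(16m_i)}+2^{-b/(16m_j)}\big).$$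
   Context: Logarithms base 2; $M(x)=\max(1,|x|)$; $\Delta(z,r)$ closed disk. $p=\sum_ip_ix^i=p_n\prod_{j=1}^k(x-z_j)^{m_j}$ with distinct roots $z_j$, multiplicities $m_j$; $\|p\|_1=\sum|p_i|$; $\tau_p$ smallest non-negative integer with $|p_i|/|p_n|\le 2^{\tau_p}$ for $i<n$; $\Gamma_p:=\max(1,\max_j\log|z_j|)$; $\sigma_i:=\min_{j\ne i}|z_i-z_j|$; $P_i:=\prod_{j\ne i}(z_i-z_j)^{m_j}$. *)

(* Complex numbers are modelled by an arbitrary
   numClosedFieldType C (algebraically closed field with conjugation,
   order and norm; the complex numbers are an instance). *)
From HB Require Import structures.
From mathcomp Require Import all_boot all_order all_algebra.
Set Implicit Arguments. Unset Strict Implicit. Unset Printing Implicit Defensive.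
Import Order.TTheory GRing.Theory Num.Theory.
Local Open Scope ring_scope.

Section Defs.
Variable C : numClosedFieldType.

Definition norm1 (q : {poly C}) : C := \sum_(i < size q) `|q`_i|.

Definition Mabs (x : C) : C := Num.max 1 `|x|.

(* 2^(-b/d) as a positive real number in C: the nonnegative d-th root of 2^-b *)
Definition pow2m (b d : nat) : C := d.-root ((2%:R : C) ^- b).

(* sigma_i = min_{j <> i} |z_i - z_j|.  The neutral element of the fold is
   sum_j |z_i - z_j|, which dominates every term, so when k >= 2 this is
   exactly the minimum over j <> i. *)
Definition sigma k (z : 'I_k -> C) (i : 'I_k) : C :=
  \big[Num.min/ \sum_(j < k) `|z i - z j|]_(j < k | j != i) `|z i - z j|.

Definition Pprod k (z : 'I_k -> C) (m : 'I_k -> nat) (i : 'I_k) : C :=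
  \prod_(j < k | j != i) (z i - z j) ^+ m j.

(* 2^{Gamma_p} where Gamma_p = max(1, max_j log2 |z_j|), i.e.
   2^{Gamma_p} = max(2, max_j |z_j|). *)
Definition twoGamma k (z : 'I_k -> C) : C := \big[Num.max/2%:R]_(j < k) `|z j|.

Definition tau_ok (p : {poly C}) (t : nat) : Prop :=
  forall i : nat, (i < (size p).-1)%N -> `|p`_i| / `|lead_coef p| <= (2%:R : C) ^+ t.
Definition is_tau (p : {poly C}) (t : nat) : Prop :=
  tau_ok p t /\ forall t', tau_ok p t' -> (t <= t')%N.

Definition b0_cond (n k : nat) (z : 'I_k -> C) (m : 'I_k -> nat) (tau : nat)
    (b0 : nat) : Prop :=
  (8 * n <= b0)%N /\ (n ^ n <= 2 ^ b0)%N (* b0 >= n log2 n *) /\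
  forall i : 'I_k,
    [/\ pow2m b0 (2 * m i) <= ((2 * n ^ 2)%:R)^-1,
        pow2m b0 (2 * m i) <= sigma z i / (2 * n)%:R,
        pow2m b0 2 <= `|Pprod z m i| /
           ((16 * n.+1)%:R * (2%:R) ^+ tau * Mabs (z i) ^+ n),
        pow2m b0 (2 * m i) <
           Num.min ((sigma z i / (4 * n)%:R) ^+ 8) (sigma z i / (1024 * n ^ 2)%:R)
      & pow2m b0 8 <
           Num.min ((16%:R)^-1)
             (`|Pprod z m i| / ((n.+1)%:R * twoGamma z ^+ (2 * n) * (2%:R) ^+ (8 * n)))].

Definition is_pow2 (b : nat) : Prop := exists e : nat, b = (2 ^ e)%N.

Definition is_b0 n k (z : 'I_k -> C) (m : 'I_k -> nat) (tau : nat) (b0 : nat) : Prop :=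
  is_pow2 b0 /\ b0_cond n z m tau b0 /\
  forall b', is_pow2 b' -> b0_cond n z m tau b' -> (b0 <= b')%N.

End Defs.
Arguments pow2m {C} b d.

From HB Require Import structures.
From mathcomp Require Import all_boot all_order all_algebra.
From mathcomp Require Import ring.
Set Implicit Arguments. Unset Strict Implicit. Unset Printing Implicit Defensive.
Import Order.TTheory GRing.Theory Num.Theory.
Local Open Scope ring_scope.

(* Fix distinct roots z_i, z_j and put d = |z_i - z_j|; by definition of the
   root separations, sigma_i <= d and sigma_j <= d.  For a root z_l with
   sigma_l <= d, two of the conditions defining b0 (which stay true when b0
   is replaced by any b >= b0, as 2^(-b/e) decreases in b) give
     2^(-b/(2 m_l))  <= sigma_l/(2n) <= d/4                 (inner_radius_le)
     2^(-b/(16 m_l)) <  sigma_l/(4n) <= d/8                 (outer_radius_le)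
   the second by taking 8th roots in 2^(-b/(2 m_l)) < (sigma_l/(4n))^8, so
   that 2 * 2^(-b/(16 m_l)) + 2^(-b/(2 m_l)) <= d/2 (cluster_radii).  Points
   of Z_i and Z_j lie within 2^(-b/(2 m_i)) of z_i and 2^(-b/(2 m_j)) of z_j,
   so the triangle inequality (disk_separation) keeps them at distance at
   least d - 2^(-b/(2 m_i)) - 2^(-b/(2 m_j)) >= 2 (2^(-b/(16 m_i)) +
   2^(-b/(16 m_j))). *)

(* A min-fold of real values is below each of its selected terms; the order
   is only partial, so real-ness of the values provides comparability. *)
Lemma bigmin_le_term (R : numDomainType) (I : eqType) (r : seq I) (P : pred I)
    (F : I -> R) x0 j :
  x0 \is Num.real -> (forall i, F i \is Num.real) -> j \in r -> P j ->
  \big[Num.min/x0]_(i <- r | P i) F i <= F j.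
Proof.
move=> x0R FR; elim: r => [//|a r IHr]; rewrite in_cons big_cons.
have restR : \big[Num.min/x0]_(i <- r | P i) F i \is Num.real.
  by apply: bigmin_real.
case/orP=> [/eqP-> Pj | jr Pj].
  by rewrite Pj (comparable_ge_min _ (real_comparable (FR a) restR)) lexx.
case: ifP => _; last exact: IHr.
by rewrite (comparable_ge_min _ (real_comparable (FR a) restR)) IHr ?orbT.
Qed.

Lemma disk_separation (R : numDomainType) (u u' w w' r r' s : R) :
  `|w - u| <= r -> `|w' - u'| <= r' -> s + r + r' <= `|u - u'| ->
  s <= `|w - w'|.
Proof.
move=> wu wu' gap.
have tri : `|u - u'| <= r + `|w - w'| + r'.
  have -> : u - u' = (u - w) + (w - w') + (w' - u') by ring.
  apply: le_trans (ler_normD _ _) _; apply: lerD; last exact: wu'.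
  by apply: le_trans (ler_normD _ _) _; rewrite distrC lerD.
have := le_trans gap tri.
by rewrite lerD2r (addrC r) lerD2r.
Qed.

Lemma ler_divn (R : numFieldType) (x : R) (a c : nat) :
  0 <= x -> (0 < a)%N -> (a <= c)%N -> x / c%:R <= x / a%:R.
Proof.
move=> x0 a0 ac; apply: ler_wpM2l => //.
by rewrite lef_pV2 ?ler_nat // qualifE /= ltr0n // (leq_trans a0 ac).
Qed.

Section RootsAndRadii.
Variable C : numClosedFieldType.

Lemma sigma_ge0 k (z : 'I_k -> C) i : 0 <= sigma z i.
Proof.
apply: (big_ind (fun x : C => 0 <= x)) => //; first exact: sumr_ge0.
move=> x y x0 y0.
by rewrite (comparable_le_min _ (real_comparable (ger0_real x0) (ger0_real y0))) x0.
Qed.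

Lemma sigma_le k (z : 'I_k -> C) i j : i != j -> sigma z i <= `|z i - z j|.
Proof.
move=> ij; apply: bigmin_le_term; rewrite ?mem_index_enum 1?eq_sym //.
  exact/ger0_real/sumr_ge0.
by move=> l; exact: ger0_real.
Qed.

Lemma pow2m_ge0 b d : 0 <= pow2m b d :> C.
Proof.
case: d => [|d]; first by rewrite /pow2m root0C.
by rewrite /pow2m rootC_ge0 // invr_ge0 exprn_ge0 // ler0n.
Qed.

Lemma pow2m_antimono b0 b d :
  (b0 <= b)%N -> (0 < d)%N -> pow2m b d <= pow2m b0 d :> C.
Proof.
move=> b0b d0; have pow_nneg e : (2%:R : C) ^- e \is Num.nneg.
  by rewrite qualifE /= invr_ge0 exprn_ge0 // ler0n.
rewrite /pow2m ler_rootC // -(subnKC b0b) exprD invfM ler_piMr //.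
  by rewrite invr_ge0 exprn_ge0 // ler0n.
rewrite invf_le1 ?exprn_gt0 ?ltr0n //.
by apply: exprn_ege1; rewrite ler1n.
Qed.

Lemma pow2m_expM b c d :
  (0 < c)%N -> (0 < d)%N -> pow2m b (c * d) ^+ c = pow2m b d :> C.
Proof.
move=> c0 d0; apply: (pexpIrn d0); rewrite ?qualifE /= ?exprn_ge0 ?pow2m_ge0 //.
by rewrite -exprM /pow2m !rootCK ?muln_gt0 ?c0.
Qed.

Variables (n b0 b mi : nat) (sig d : C).
Hypotheses (n_ge2 : (2 <= n)%N) (mi_gt0 : (0 < mi)%N) (b0_le_b : (b0 <= b)%N).
Hypotheses (sig_ge0 : 0 <= sig) (sig_le_d : sig <= d).

Lemma inner_radius_le :
  pow2m b0 (2 * mi) <= sig / (2 * n)%:R -> pow2m b (2 * mi) <= d / 4%:R.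
Proof.
move=> hb0; have d0 : (0 < 2 * mi)%N by rewrite muln_gt0.
apply: le_trans (pow2m_antimono b0_le_b d0) _; apply: le_trans hb0 _.
have n4 : (4 <= 2 * n)%N := leq_mul (leqnn 2) n_ge2.
apply: le_trans (ler_divn (a := 4) sig_ge0 isT n4) _.
by apply: ler_wpM2r => //; rewrite invr_ge0 ler0n.
Qed.

(* The separation radius 2^(-b/(16 m)), an 8th root of 2^(-b/(2 m)), is at
   most d/8 when 2^(-b0/(2 m)) < (sig/(4n))^8. *)
Lemma outer_radius_le :
  pow2m b0 (2 * mi) < (sig / (4 * n)%:R) ^+ 8 -> pow2m b (16 * mi) <= d / 8%:R.
Proof.
move=> hb0; have q_ge0 : 0 <= sig / (4 * n)%:R by rewrite divr_ge0 ?ler0n.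
have lt_q : pow2m b (16 * mi) < sig / (4 * n)%:R.
  rewrite -(ltr_pXn2r (isT : (0 < 8)%N)) ?qualifE /= ?pow2m_ge0 //.
  rewrite -[(16 * mi)%N]/(8 * 2 * mi)%N -mulnA pow2m_expM ?muln_gt0 //.
  apply: le_lt_trans hb0.
  by apply: pow2m_antimono; rewrite ?muln_gt0.
have n8 : (8 <= 4 * n)%N := leq_mul (leqnn 4) n_ge2.
apply/ltW/(lt_le_trans lt_q)/(le_trans (ler_divn (a := 8) sig_ge0 isT n8)).
by apply: ler_wpM2r => //; rewrite invr_ge0 ler0n.
Qed.

Lemma cluster_radii :
  pow2m b0 (2 * mi) <= sig / (2 * n)%:R ->
  pow2m b0 (2 * mi) < (sig / (4 * n)%:R) ^+ 8 ->
  2%:R * pow2m b (16 * mi) + pow2m b (2 * mi) <= d / 2%:R.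
Proof.
move=> inner outer; have -> : d / 2%:R = 2%:R * (d / 8%:R) + d / 4%:R by field.
apply: lerD; last exact: inner_radius_le.
by apply: ler_wpM2l; [rewrite ler0n | exact: outer_radius_le].
Qed.

End RootsAndRadii.

Lemma b0_cluster_radii (C : numClosedFieldType) n k (z : 'I_k -> C)
    (m : 'I_k -> nat) tau b0 b l (d : C) :
  (2 <= n)%N -> (0 < m l)%N -> (b0 <= b)%N -> b0_cond n z m tau b0 ->
  sigma z l <= d ->
  2%:R * pow2m b (16 * m l) + pow2m b (2 * m l) <= d / 2%:R.
Proof.
move=> n_ge2 ml_gt0 b0_le_b [_ [_ hb0]] sig_le_d.
have [_ inner _ outer _] := hb0 l.
have real_q8 : (sigma z l / (4 * n)%:R) ^+ 8 \is Num.real.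
  by rewrite ger0_real ?exprn_ge0 ?divr_ge0 ?sigma_ge0 ?ler0n.
have real_q' : sigma z l / (1024 * n ^ 2)%:R \is Num.real.
  by rewrite ger0_real ?divr_ge0 ?sigma_ge0 ?ler0n.
move: outer; rewrite (comparable_lt_min _ (real_comparable real_q8 real_q')).
case/andP=> outer _.
exact: cluster_radii n_ge2 ml_gt0 b0_le_b (sigma_ge0 z l) sig_le_d inner outer.
Qed.

Theorem lemma9 (C : numClosedFieldType) (p : {poly C}) (n k : nat)
  (z : 'I_k -> C) (m : 'I_k -> nat) (zhat : 'I_n -> C) (b b0 tau : nat) :
  (2 <= n)%N -> size p = n.+1 -> (2 <= k)%N ->
  injective z -> (forall i, (0 < m i)%N) ->
  p = lead_coef p *: \prod_(j < k) ('X - (z j)%:P) ^+ m j ->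
  norm1 (p - lead_coef p *: \prod_(j < n) ('X - (zhat j)%:P))
    <= (2%:R : C) ^- b * norm1 p ->
  is_tau p tau ->
  is_b0 n z m tau b0 ->
  (b0 <= b)%N ->
  forall (i j : 'I_k) (a a' : 'I_n), i != j ->
    `|zhat a - z i| <= pow2m b (2 * m i) ->
    `|zhat a' - z j| <= pow2m b (2 * m j) ->
    2%:R * (pow2m b (16 * m i) + pow2m b (16 * m j)) <= `|zhat a - zhat a'|.
Proof.
move=> n_ge2 _ _ _ m_gt0 _ _ _ [_ [hb0 _]] b0_le_b i j a a' ij near_i near_j.
have sig_i : sigma z i <= `|z i - z j| by exact: sigma_le.
have sig_j : sigma z j <= `|z i - z j|.
  by rewrite distrC; apply: sigma_le; rewrite eq_sym.
have radii_i := b0_cluster_radii n_ge2 (m_gt0 i) b0_le_b hb0 sig_i.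
have radii_j := b0_cluster_radii n_ge2 (m_gt0 j) b0_le_b hb0 sig_j.
apply: disk_separation near_i near_j _; rewrite [X in _ <= X]splitr.
set ri := pow2m b (2 * m i); set rj := pow2m b (2 * m j).
set si := pow2m b (16 * m i); set sj := pow2m b (16 * m j).
have -> : 2%:R * (si + sj) + ri + rj = (2%:R * si + ri) + (2%:R * sj + rj)
  by ring.
exact: lerD.
Qed.
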